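(* Let $h\in[n+1]^d$ with $\mathcal Y^h\ne\emptyset$. Then for every $t\in\mathbb{R}^d_+$, \[ \hat\Phi^{\mathrm{lwc}}(t;h)=\max_{1\le j\le d}\Big\{\frac{t_j}{r_j(h_j)}-\min\Big\{\frac{\hat\mu_j(0)}{\hat\sigma_j(0)},\ \lim_{z_j\uparrow\omega_j(\hat Q^{\mathrm{gwc}}_{1-\alpha})}\frac{\hat\mu_j(z_j)}{\hat\sigma_j(z_j)}\Big\}\Big\}, \] where $r_j(h_j)=\hat\sigma_j$ if $E^{(h_j-1)}_j\le\hat\mu_j<U^{h_j}_j$, and $r_j(h_j)=\min\{\hat\sigma_j(E^{(h_j-1)}_j),\hat\sigma_j(U^{h_j}_j)\}$ otherwise (the limit is $z_j\to\infty$ when $\omega_j(\hat Q^{\mathrm{gwc}}_{1-\alpha})=+\infty$).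
   Context: Setting: $n\ge2$, $d\ge1$, $\alpha\in(0,1)$. Calibration residuals $E^1,\dots,E^n\in\mathbb{R}^d_+$ with, for each $j$, pairwise distinct coordinates $E^1_j,\dots,E^n_j$; test input $X^{n+1}\in\mathcal X$ and a residual function $E:\mathcal X\times\mathbb{R}^d\to\mathbb{R}^d$. $\hat Q_{1-\alpha}(x_1,\dots,x_n)$: the $\lceil(1-\alpha)(n+1)\rceil$-th smallest value of $\{x_1,\dots,x_n,+\infty\}$. $\hat\mu_j=\frac1n\sum_{i=1}^nE^i_j$, $\hat\sigma_j=\sqrt{\frac1n\sum_{i=1}^n(E^i_j-\hat\mu_j)^2}$; for $z\ge0$, $\hat\mu_j(z)=\frac{\sum_{i=1}^nE^i_j+z}{n+1}$, $\hat\sigma_j(z)=\sqrt{\frac{\sum_{i=1}^n(E^i_j-\hat\mu_j(z))^2+(z-\hat\mu_j(z))^2}{n}}$. Link functions: $\omega_j(c)=0$ if $c\le-\frac n{\sqrt{n+1}}$; $\max\{0,\hat\mu_j-\hat\sigma_j|c|\sqrt{\tfrac{(n+1)^2}{n^2-(n+1)c^2}}\}$ if $-\frac n{\sqrt{n+1}}<c<0$; $\hat\mu_j+\hat\sigma_j|c|\sqrt{\tfrac{(n+1)^2}{n^2-(n+1)c^2}}$ if $0\le c<\frac n{\sqrt{n+1}}$; $+\infty$ if $c\ge\frac n{\sqrt{n+1}}$. GWC: $\hat\Phi^{\mathrm{gwc}}(t)=\max_j\sup_{z_j\ge0}\frac{t_j-\hat\mu_j(z_j)}{\hat\sigma_j(z_j)}$,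 $\hat Q^{\mathrm{gwc}}_{1-\alpha}=\hat Q_{1-\alpha}(\hat\Phi^{\mathrm{gwc}}(E^1),\dots,\hat\Phi^{\mathrm{gwc}}(E^n))$, $\mathcal E^{\mathrm{gwc}}=\prod_{j=1}^d[0,\omega_j(\hat Q^{\mathrm{gwc}}_{1-\alpha})]$ (interpreted as $[0,\infty)$ when $\omega_j=+\infty$). Partition: $E^{(k)}_j$ is the $k$-th smallest of $E^1_j,\dots,E^n_j$ for $k\in[n]$, with $E^{(0)}_j:=0$, $E^{(n+1)}_j:=+\infty$. For $h\in[n+1]^d$: $U^{h_j}_j:=\min\{E^{(h_j)}_j,\omega_j(\hat Q^{\mathrm{gwc}}_{1-\alpha})\}$, $R^h:=\prod_{j=1}^d[E^{(h_j-1)}_j,U^{h_j}_j)$, $\mathcal Y^h:=\{y\in\mathbb{R}^d:E(X^{n+1},y)\in R^h\}$. LWC transformation: $\hat\Phi^{\mathrm{lwc}}(t;h):=\max_{1\le j\le d}\Big\{\sup_{z\in R^h}\frac{t_j}{\hat\sigma_j(z_j)}-\inf_{z\in\mathcal E^{\mathrm{gwc}}}\frac{\hat\mu_j(z_j)}{\hat\sigma_j(z_j)}\Big\}$. *)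

From HB Require Import structures.
From mathcomp Require Import all_boot all_order all_algebra.
From mathcomp Require Import all_classical all_reals all_analysis.
Set Implicit Arguments. Unset Strict Implicit. Unset Printing Implicit Defensive.
Import Order.TTheory GRing.Theory Num.Theory.
Import numFieldNormedType.Exports.
Local Open Scope classical_set_scope.
Local Open Scope ring_scope.

Section Defs.
Variables (R : realType) (n d : nat).
(* calibration residuals: E i j = E^{i+1}_{j+1} *)
Variable E : 'I_n -> 'I_d -> R.

Definition muhat (j : 'I_d) : R := (\sum_(i < n) E i j) / n%:R.
Definition sigmahat (j : 'I_d) : R :=
  Num.sqrt ((\sum_(i < n) (E i j - muhat j) ^+ 2) / n%:R).

Definition muz (j : 'I_d) (z : R) : R := (\sum_(i < n) E i j + z) / n.+1%:R.
Definition sigmaz (j : 'I_d) (z : R) : R :=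
  Num.sqrt ((\sum_(i < n) (E i j - muz j z) ^+ 2 + (z - muz j z) ^+ 2) / n%:R).

Definition sigmaz_e (j : 'I_d) (z : \bar R) : \bar R :=
  match z with
  | EFin r => (sigmaz j r)%:E
  | _ => +oo%E
  end.

Definition Qhat (a : R) (x : 'I_n -> \bar R) : \bar R :=
  nth (+oo)%E (sort (<=%O) (rcons [seq x i | i <- enum 'I_n] (+oo)%E))
      (`|Num.ceil ((1 - a) * n.+1%:R)|%N).-1.

Definition omega (j : 'I_d) (c : \bar R) : \bar R :=
  let b := n%:R / Num.sqrt (n.+1%:R) : R in
  match c with
  | EFin c =>
      let s := Num.sqrt (n.+1%:R ^+ 2 / (n%:R ^+ 2 - n.+1%:R * c ^+ 2)) in
      if c <= - b then 0%E
      else if c < 0 then (Num.max 0 (muhat j - sigmahat j * `|c| * s))%:E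
      else if c < b then (muhat j + sigmahat j * `|c| * s)%:E
      else (+oo)%E
  | +oo%E => (+oo)%E
  | -oo%E => 0%E
  end.

Definition Phi_gwc (t : 'I_d -> R) : \bar R :=
  \big[Order.max/-oo%E]_(j < d)
    ereal_sup [set ((t j - muz j z) / sigmaz j z)%:E | z in [set z : R | 0 <= z]].

Definition Q_gwc (a : R) : \bar R := Qhat a (fun i => Phi_gwc (E i)).

Definition E_gwc (a : R) : set ('I_d -> R) :=
  [set z | forall j, 0 <= z j /\ ((z j)%:E <= omega j (Q_gwc a))%E].

Definition Eord (j : 'I_d) (k : nat) : \bar R :=
  if k == 0%N then 0%E
  else if (k <= n)%N then (nth 0 (sort (<=%R) [seq E i j | i <- enum 'I_n]) k.-1)%:E
  else (+oo)%E.

Definition Uh (a : R) (j : 'I_d) (k : nat) : \bar R :=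
  Order.min (Eord j k) (omega j (Q_gwc a)).

Definition Rh (a : R) (h : 'I_d -> nat) : set ('I_d -> R) :=
  [set z | forall j, (Eord j (h j).-1 <= (z j)%:E)%E /\ ((z j)%:E < Uh a j (h j))%E].

Definition Yh (X : Type) (Eres : X -> ('I_d -> R) -> ('I_d -> R))
  (x : X) (a : R) (h : 'I_d -> nat) : set ('I_d -> R) :=
  [set y | Rh a h (Eres x y)].

Definition Phi_lwc (a : R) (t : 'I_d -> R) (h : 'I_d -> nat) : \bar R :=
  \big[Order.max/-oo%E]_(j < d)
    (ereal_sup [set ((t j) / sigmaz j (z j))%:E | z in Rh a h]
     - ereal_inf [set (muz j (z j) / sigmaz j (z j))%:E | z in E_gwc a])%E.

Definition r_h (a : R) (j : 'I_d) (k : nat) : R :=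
  if ((Eord j k.-1 <= (muhat j)%:E) && ((muhat j)%:E < Uh a j k))%E
  then sigmahat j
  else fine (Order.min (sigmaz_e j (Eord j k.-1)) (sigmaz_e j (Uh a j k))).

Definition lim_ratio (a : R) (j : 'I_d) : R :=
  match omega j (Q_gwc a) with
  | EFin w => lim ((muz j z / sigmaz j z) @[z --> w^'-])
  | _ => lim ((muz j z / sigmaz j z) @[z --> +oo])
  end.

End Defs.

(* Writing k = 1/(n+1), m = muhat_j and s2 = sigmahat_j^2,
   one has muhat_j(z) = m + k (z - m) and sigmahat_j(z) = sqrt (s2 + k (z - m)^2),
   and m, s2 > 0 because the residuals are nonnegative and pairwise distinct.
   R^h and E^gwc are boxes, so both extrema in Phi_lwc reduce to one coordinate.
   Since sigmahat_j(z) grows with |z - m|, its infimum over [E^(h_j-1), U^h_j) is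
   sigmahat_j if m lies in the interval and otherwise its value at the endpoint
   nearer to m; this gives the supremum t_j / r_j(h_j).  The ratio
   muhat_j / sigmahat_j is a nonnegative affine function over a positive convex
   one, hence quasiconcave on [0, oo): its infimum over [0, omega_j] is the
   smaller of its two end values, the right one being the limit at +oo when
   omega_j = +oo (the ratio is eventually nonincreasing there). *)

From HB Require Import structures.
From mathcomp Require Import all_boot all_order all_algebra.
From mathcomp Require Import all_classical all_reals all_analysis.
From mathcomp Require Import lra ring.
Import Order.TTheory GRing.Theory Num.Theory.
Import numFieldNormedType.Exports.
Local Open Scope classical_set_scope.
Local Open Scope ring_scope.
Set Implicit Arguments. Unset Strict Implicit.

Lemma ereal_sup_div_le (R : realType) (S : set R) (g : R -> R) (t r : R) :
  0 <= t -> 0 < r -> (forall x, S x -> r <= g x) ->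
  (ereal_sup [set (t / g x)%:E | x in S] <= (t / r)%:E)%E.
Proof.
move=> t0 r0 rg; apply: ge_ereal_sup => _ [x Sx <-]; rewrite lee_fin ler_wpM2l //.
by rewrite lef_pV2 ?posrE ?rg // (lt_le_trans r0) ?rg.
Qed.

Section ShiftedMoments.
Variables (R : realType) (k m s2 : R).
Hypotheses (k_gt0 : 0 < k) (k_lt1 : k < 1) (m_gt0 : 0 < m) (s2_gt0 : 0 < s2).

Definition shift_mean (z : R) := m + k * (z - m).
Definition shift_sd (z : R) := Num.sqrt (s2 + k * (z - m) ^+ 2).
Definition shift_ratio (z : R) := shift_mean z / shift_sd z.

Definition shift_sd_e (z : \bar R) : \bar R :=
  if z is r%:E then (shift_sd r)%:E else +oo%E.

Lemma shift_var_gt0 z : 0 < s2 + k * (z - m) ^+ 2.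
Proof. by rewrite ltr_wpDr // mulr_ge0 ?sqr_ge0 ?ltW. Qed.

Lemma shift_sd_gt0 z : 0 < shift_sd z.
Proof. by rewrite sqrtr_gt0 shift_var_gt0. Qed.

Lemma shift_sd_sqr z : shift_sd z ^+ 2 = s2 + k * (z - m) ^+ 2.
Proof. by rewrite sqr_sqrtr // ltW // shift_var_gt0. Qed.

Lemma shift_sd_le x y : (x - m) ^+ 2 <= (y - m) ^+ 2 -> shift_sd x <= shift_sd y.
Proof.
move=> xy; rewrite ler_sqrt; last exact/ltW/shift_var_gt0.
by rewrite lerD2l ler_pM2l.
Qed.

Lemma shift_sd_center : shift_sd m = Num.sqrt s2.
Proof. by rewrite /shift_sd subrr expr0n /= mulr0 addr0. Qed.

Lemma shift_sd_ge_center z : Num.sqrt s2 <= shift_sd z.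
Proof. by rewrite -shift_sd_center; apply: shift_sd_le; rewrite subrr expr0n sqr_ge0. Qed.

Lemma shift_sd_nondecreasing_right (x y : R) :
  m <= x -> x <= y -> shift_sd x <= shift_sd y.
Proof. by move=> mx xy; apply: shift_sd_le; nra. Qed.

Lemma shift_sd_nonincreasing_left (x y : R) :
  x <= y -> y <= m -> shift_sd y <= shift_sd x.
Proof. by move=> xy ym; apply: shift_sd_le; nra. Qed.

Lemma shift_mean_ge0 z : 0 <= z -> 0 <= shift_mean z.
Proof.
move=> z0; rewrite /shift_mean.
have : 0 <= k * z := mulr_ge0 (ltW k_gt0) z0.
have : 0 <= (1 - k) * m by rewrite mulr_ge0 ?subr_ge0 ?ltW.
lra.
Qed.

Lemma shift_ratio_ge0 z : 0 <= z -> 0 <= shift_ratio z.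
Proof. by move=> z0; apply: divr_ge0; [exact: shift_mean_ge0|exact/ltW/shift_sd_gt0]. Qed.

Lemma shift_sd_convex (x y l : R) : 0 <= l <= 1 ->
  shift_sd (l * x + (1 - l) * y) <= l * shift_sd x + (1 - l) * shift_sd y.
Proof.
move=> /andP[l0 l1].
have Dx := shift_sd_sqr x; have Dy := shift_sd_sqr y.
have Dx0 := shift_sd_gt0 x; have Dy0 := shift_sd_gt0 y.
set u := x - m in Dx; set v := y - m in Dy.
(* Cauchy-Schwarz for the inner product (a, b) . (c, d) = s2 a c + k b d *)
have cs : s2 + k * u * v <= shift_sd x * shift_sd y.
  have sq : (s2 + k * u * v) ^+ 2 <= (shift_sd x * shift_sd y) ^+ 2.
    rewrite exprMn Dx Dy.
    have : 0 <= s2 * k * (u - v) ^+ 2 by rewrite mulr_ge0 ?sqr_ge0 // mulr_ge0 // ltW.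
    lra.
  have : 0 < shift_sd x * shift_sd y by apply: mulr_gt0.
  nra.
have rhs0 : 0 <= l * shift_sd x + (1 - l) * shift_sd y.
  by apply: addr_ge0; apply: mulr_ge0; lra.
rewrite -(ger0_norm rhs0) -sqrtr_sqr ler_sqrt ?sqr_ge0 //.
have -> : l * x + (1 - l) * y - m = l * u + (1 - l) * v by rewrite /u /v; ring.
have e1 : l ^+ 2 * shift_sd x ^+ 2 = l ^+ 2 * (s2 + k * u ^+ 2) by rewrite Dx.
have e2 : (1 - l) ^+ 2 * shift_sd y ^+ 2 = (1 - l) ^+ 2 * (s2 + k * v ^+ 2) by rewrite Dy.
have : 0 <= l * (1 - l) * (shift_sd x * shift_sd y - (s2 + k * u * v)).
  by apply: mulr_ge0; [apply: mulr_ge0; lra|lra].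
lra.
Qed.

Lemma shift_ratio_quasiconcave (x z y : R) : 0 <= x -> x <= z -> z <= y ->
  Num.min (shift_ratio x) (shift_ratio y) <= shift_ratio z.
Proof.
move=> x0 xz zy.
have [exy|nxy] := eqVneq x y.
  have -> : z = x by apply/le_anti; rewrite xz exy zy.
  by rewrite -exy minxx.
have lxy : x < y by rewrite lt_neqAle nxy (le_trans xz zy).
set c := Num.min (shift_ratio x) (shift_ratio y).
have c0 : 0 <= c by rewrite le_min !shift_ratio_ge0 //; lra.
have cx : c * shift_sd x <= shift_mean x.
  by rewrite -ler_pdivlMr ?shift_sd_gt0 // ge_min lexx.
have cy : c * shift_sd y <= shift_mean y.
  by rewrite -ler_pdivlMr ?shift_sd_gt0 // ge_min lexx orbT.
set l := (y - z) / (y - x).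
have ez : z = l * x + (1 - l) * y by rewrite /l; field; rewrite subr_eq0 eq_sym.
have l0 : 0 <= l by rewrite divr_ge0 ?subr_ge0 // ltW.
have l1 : l <= 1 by rewrite ler_pdivrMr ?subr_gt0 // mul1r; lra.
have Dz := shift_sd_convex x y (introT andP (conj l0 l1)).
rewrite /shift_ratio ler_pdivlMr ?shift_sd_gt0 // ez.
have -> : shift_mean (l * x + (1 - l) * y) = l * shift_mean x + (1 - l) * shift_mean y.
  by rewrite /shift_mean; ring.
have : c * shift_sd (l * x + (1 - l) * y) <= c * (l * shift_sd x + (1 - l) * shift_sd y).
  by rewrite ler_wpM2l.
have : l * (c * shift_sd x) <= l * shift_mean x by rewrite ler_wpM2l.
have : (1 - l) * (c * shift_sd y) <= (1 - l) * shift_mean y by rewrite ler_wpM2l // subr_ge0.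
lra.
Qed.

(* Past [m + s2 / m], both [m u - s2] and [m v - s2] are nonnegative, so every
   term of the cross difference [e] below is. *)
Lemma shift_ratio_nonincreasing (x y : R) : m + s2 / m <= x -> x <= y ->
  shift_ratio y <= shift_ratio x.
Proof.
move=> hx xy.
set u := x - m; set v := y - m.
have mu : s2 <= m * u by rewrite /u mulrC -ler_pdivrMr //; lra.
have mv : s2 <= m * v by rewrite /v mulrC -ler_pdivrMr //; lra.
have u0 : 0 <= u by have := divr_ge0 (ltW s2_gt0) (ltW m_gt0); rewrite /u; lra.
have uv : u <= v by rewrite /u /v; lra.
have Nx0 : 0 < shift_mean x by rewrite ltr_wpDr // mulr_ge0 ?(ltW k_gt0).
have Ny0 : 0 < shift_mean y.
  by rewrite ltr_wpDr // mulr_ge0 ?(ltW k_gt0) ?(le_trans u0 uv).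
have Dx0 := shift_sd_gt0 x; have Dy0 := shift_sd_gt0 y.
rewrite /shift_ratio ler_pdivrMr // mulrAC ler_pdivlMr //.
have key : (shift_mean y * shift_sd x) ^+ 2 <= (shift_mean x * shift_sd y) ^+ 2.
  rewrite !exprMn !shift_sd_sqr /shift_mean -/u -/v.
  have e : (m + k * u) ^+ 2 * (s2 + k * v ^+ 2) - (m + k * v) ^+ 2 * (s2 + k * u ^+ 2)
    = k * (v - u) * (m * (m * u - s2) + m * (m * v - s2)
                     + k * (u * (m * v - s2) + v * (m * u - s2))) by ring.
  have : 0 <= k * (v - u) * (m * (m * u - s2) + m * (m * v - s2)
                     + k * (u * (m * v - s2) + v * (m * u - s2))).
    clearbody u v; have v0 : 0 <= v := le_trans u0 uv.
    have mu0 : 0 <= m * u - s2 by rewrite subr_ge0.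
    have mv0 : 0 <= m * v - s2 by rewrite subr_ge0.
    have k0 := ltW k_gt0; have m0 := ltW m_gt0.
    have vu : 0 <= v - u by rewrite subr_ge0.
    have a1 := addr_ge0 (mulr_ge0 m0 mu0) (mulr_ge0 m0 mv0).
    have a2 := mulr_ge0 k0 (addr_ge0 (mulr_ge0 u0 mv0) (mulr_ge0 v0 mu0)).
    exact: mulr_ge0 (mulr_ge0 k0 vu) (addr_ge0 a1 a2).
  lra.
have : 0 < shift_mean x * shift_sd y by apply: mulr_gt0.
have : 0 < shift_mean y * shift_sd x by apply: mulr_gt0.
nra.
Qed.

Lemma shift_ratio_cvgy : cvg (shift_ratio x @[x --> +oo]).
Proof.
set z0 := m + s2 / m.
have z00 : 0 <= z0 by rewrite addr_ge0 ?divr_ge0 // ltW.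
pose g r := - shift_ratio (Num.max r z0).
have g_nd : {homo g : a b / a <= b}.
  move=> a b ab; rewrite /g lerN2; apply: shift_ratio_nonincreasing.
    by rewrite le_max lexx orbT.
  by rewrite ge_max !le_max ab lexx orbT.
have g_ub : has_ubound (range g).
  exists 0 => _ [r _ <-]; rewrite /g oppr_le0 shift_ratio_ge0 //.
  by rewrite le_max z00 orbT.
move/cvgN: (nondecreasing_cvgr g_nd g_ub); rewrite opprK => g_cvg.
apply/cvg_ex; exists (- sup (range g)); apply: cvg_trans g_cvg; apply: near_eq_cvg.
near=> x; congr shift_ratio; apply/max_idPl.
by near: x; apply: nbhs_pinfty_ge; rewrite num_real.
Unshelve. all: by end_near.
Qed.

Lemma shift_sd_continuous : continuous shift_sd.
Proof.
move=> w; apply: continuous_comp; last exact: sqrt_continuous.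
apply: cvgD; first exact: cvg_cst.
apply: cvgMl_tmp; rewrite expr2; under eq_fun do rewrite expr2.
by apply: cvgM; apply: cvgB; (exact: cvg_id || exact: cvg_cst).
Qed.

Lemma shift_ratio_continuous : continuous shift_ratio.
Proof.
move=> w; apply: cvgM.
  apply: cvgD; first exact: cvg_cst.
  by apply: cvgMl_tmp; apply: cvgB; (exact: cvg_id || exact: cvg_cst).
by apply: cvgV; [rewrite gt_eqF ?shift_sd_gt0|exact: shift_sd_continuous].
Qed.

Lemma div_shift_sd_continuous (t w : R) :
  ((t / shift_sd x) @[x --> w] --> t / shift_sd w)%R.
Proof.
apply: cvgMl_tmp; apply: cvgV; first by rewrite gt_eqF ?shift_sd_gt0.
exact: shift_sd_continuous.
Qed.

Local Open Scope ereal_scope.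

Lemma ereal_inf_shift_ratio_segment (w : R) : (0 <= w)%R ->
  ereal_inf [set (shift_ratio x)%:E | x in [set x | (0 <= x)%R /\ x%:E <= w%:E]] =
  (Num.min (shift_ratio 0) (shift_ratio w))%:E.
Proof.
move=> w0; apply/le_anti/andP; split.
  apply: ge_ereal_inf.
  have [_|_] := leP (shift_ratio 0) (shift_ratio w).
    by exists (shift_ratio 0)%:E => //; exists 0%R.
  by exists (shift_ratio w)%:E => //; exists w.
apply: le_ereal_inf_tmp => _ [x [x0 xw] <-]; rewrite lee_fin.
by apply: shift_ratio_quasiconcave; rewrite -?lee_fin.
Qed.

Lemma ereal_inf_shift_ratio_halfline :
  ereal_inf [set (shift_ratio x)%:E | x in [set x | (0 <= x)%R /\ x%:E <= +oo]] =
  (Num.min (shift_ratio 0) (lim (shift_ratio x @[x --> +oo])))%:E.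
Proof.
set L := lim _; set I := ereal_inf _.
have I_ge : (Num.min (shift_ratio 0) L)%:E <= I.
  apply: le_ereal_inf_tmp => _ [x [x0 _] <-]; rewrite lee_fin ge_min.
  have [//|ltx0] := leP (shift_ratio 0) (shift_ratio x).
  apply/orP; right; apply: limr_le; first exact: shift_ratio_cvgy.
  near=> y; have xy : (x <= y)%R by near: y; apply: nbhs_pinfty_ge; rewrite num_real.
  have := shift_ratio_quasiconcave (lexx 0) x0 xy.
  by rewrite ge_min leNgt ltx0.
have I_le0 : I <= (shift_ratio 0)%:E.
  by apply: ereal_inf_lbound; exists 0%R => //; split; [|exact: leey].
apply/le_anti; rewrite I_ge andbT.
have [//|L_lt] := leP (shift_ratio 0) L.
have Ifin : I \is a fin_num.
  by rewrite fin_numElt (lt_le_trans _ I_ge) ?ltNyr // (le_lt_trans I_le0) ?ltry.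
rewrite -(fineK Ifin) lee_fin; apply: limr_ge; first exact: shift_ratio_cvgy.
near=> y; have y0 : (0 <= y)%R by near: y; apply: nbhs_pinfty_ge; rewrite num_real.
rewrite -lee_fin fineK //; apply: ereal_inf_lbound; exists y => //; split => //.
exact: leey.
Unshelve. all: by end_near.
Qed.

Lemma ereal_inf_shift_ratio (w : \bar R) : 0 <= w ->
  ereal_inf [set (shift_ratio x)%:E | x in [set x | (0 <= x)%R /\ x%:E <= w]] =
  (Num.min (shift_ratio 0) (if w is w'%:E then lim (shift_ratio x @[x --> w'^'-])
                            else lim (shift_ratio x @[x --> +oo])))%:E.
Proof.
case: w => [w'| |] w0 /=; last by rewrite leeNy_eq in w0.
  rewrite (cvg_lim _ (cvg_at_left_filter (shift_ratio_continuous (x:=w')))) //.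
  by rewrite ereal_inf_shift_ratio_segment // -lee_fin.
exact: ereal_inf_shift_ratio_halfline.
Qed.

Definition shift_sd_inf (a b : \bar R) : R :=
  if (a <= m%:E) && (m%:E < b) then Num.sqrt s2
  else fine (Order.min (shift_sd_e a) (shift_sd_e b)).

Local Notation sup_div_shift_sd t a b :=
  (ereal_sup [set (t / shift_sd x)%:E | x in [set x | a <= x%:E /\ x%:E < b]]).

Section SupOverInterval.
Variable t : R.
Hypothesis t_ge0 : (0 <= t)%R.

Lemma ereal_sup_div_shift_sd_center a b : a <= m%:E -> m%:E < b ->
  sup_div_shift_sd t a b = (t / Num.sqrt s2)%:E.
Proof.
move=> am mb; rewrite -shift_sd_center; apply/le_anti/andP; split.
  apply: ereal_sup_div_le => // [|x _]; first exact: shift_sd_gt0.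
  by rewrite shift_sd_center shift_sd_ge_center.
by apply: ereal_sup_ubound; exists m.
Qed.

Lemma ereal_sup_div_shift_sd_above (a : R) b : (m <= a)%R -> a%:E < b ->
  sup_div_shift_sd t a%:E b = (t / shift_sd a)%:E.
Proof.
move=> ma ab; apply/le_anti/andP; split.
  apply: ereal_sup_div_le => // [|x [ax _]]; first exact: shift_sd_gt0.
  by apply: shift_sd_nondecreasing_right; rewrite -?lee_fin.
by apply: ereal_sup_ubound; exists a.
Qed.

(* [b] is not attained: [t / shift_sd] is approached from the left by continuity. *)
Lemma ereal_sup_div_shift_sd_below a (b x0 : R) : (b <= m)%R ->
  a <= x0%:E -> (x0 < b)%R -> sup_div_shift_sd t a b%:E = (t / shift_sd b)%:E.
Proof.
move=> bm ax0 x0b; set S := [set _ | _ in _].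
have S_le : ereal_sup S <= (t / shift_sd b)%:E.
  apply: ereal_sup_div_le => // [|x [_ xb]]; first exact: shift_sd_gt0.
  by apply: shift_sd_nonincreasing_left => //; rewrite ltW -?lte_fin.
have S_ge x : a <= x%:E -> (x < b)%R -> (t / shift_sd x)%:E <= ereal_sup S.
  by move=> ax xb; apply: ereal_sup_ubound; exists x.
have Sfin : ereal_sup S \is a fin_num.
  rewrite fin_numElt (lt_le_trans _ (S_ge _ ax0 x0b)) ?ltNyr //.
  by rewrite (le_lt_trans S_le) ?ltry.
apply/le_anti; rewrite S_le /= -(fineK Sfin) lee_fin.
apply: (cvgr_to_le (cvg_at_left_filter (div_shift_sd_continuous (t:=t) (w:=b)))).
near=> x; rewrite -lee_fin fineK //; apply: S_ge.
  apply: le_trans ax0 _; rewrite lee_fin; apply/ltW.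
  by near: x; exact: nbhs_left_gt.
by near: x; exact: nbhs_left_lt.
Unshelve. all: by end_near.
Qed.

Lemma ereal_sup_div_shift_sd a b (x0 : R) : a <= x0%:E -> x0%:E < b ->
  sup_div_shift_sd t a b = (t / shift_sd_inf a b)%:E.
Proof.
move=> ax0 x0b; rewrite /shift_sd_inf; case: ifPn => [/andP[am mb]|not_center].
  exact: ereal_sup_div_shift_sd_center.
have [ma|am] := ltP m%:E a.
  have afin : a \is a fin_num.
    by rewrite fin_numElt (lt_trans _ ma) ?ltNyr // (le_lt_trans ax0) ?ltry.
  rewrite -(fineK afin) lte_fin in ma *; rewrite -(fineK afin) in ax0.
  have ab : (fine a)%:E < b by apply: le_lt_trans x0b.
  rewrite (ereal_sup_div_shift_sd_above (ltW ma) ab) min_l //=.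
  case: b ab {x0b not_center} => [b'| |] //= ab; last exact: leey.
  by rewrite lee_fin shift_sd_nondecreasing_right ?ltW // -lte_fin.
have bm : b <= m%:E by rewrite leNgt; move: not_center; rewrite am.
have bfin : b \is a fin_num.
  by rewrite fin_numElt (le_lt_trans bm) ?ltry // (le_lt_trans _ x0b) ?leNye.
rewrite -(fineK bfin) lee_fin in bm *; rewrite -(fineK bfin) lte_fin in x0b.
rewrite (ereal_sup_div_shift_sd_below bm ax0 x0b) min_r //=.
case: a ax0 am {not_center} => [a'| |] //= ax0 am; last exact: leey.
rewrite lee_fin shift_sd_nonincreasing_left // -lee_fin (le_trans ax0) //.
by rewrite lee_fin (ltW x0b).
Qed.

End SupOverInterval.

End ShiftedMoments.

Section EmpiricalMoments.
Variables (R : realType) (n d : nat) (E : 'I_n -> 'I_d -> R) (j : 'I_d).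
Hypotheses (n_ge2 : (2 <= n)%N) (E_ge0 : forall i, 0 <= E i j)
  (E_inj : injective (fun i => E i j)).

Let m := muhat E j.
Let s2 := (\sum_(i < n) (E i j - m) ^+ 2) / n%:R.
Let k := (n.+1%:R : R)^-1.

Lemma column_nonconstant c : ~ (forall i, E i j = c).
Proof.
have lt01 : (0 < n)%N by apply: leq_trans n_ge2.
move=> Ec; have /E_inj/(congr1 val) : E (Ordinal lt01) j = E (Ordinal n_ge2) j.
  by rewrite !Ec.
by [].
Qed.

Lemma natr_n_neq0 : (n%:R : R) != 0.
Proof. by rewrite pnatr_eq0 -lt0n (leq_trans _ n_ge2). Qed.

Lemma muhat_gt0 : 0 < m.
Proof.
have sum_ge0 : 0 <= \sum_(i < n) E i j by rewrite sumr_ge0.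
rewrite divr_gt0 ?ltr0n ?(leq_trans _ n_ge2) // lt0r sum_ge0 andbT.
apply/eqP => /psumr_eq0P E0; apply: (column_nonconstant (c := 0)) => i.
exact: E0.
Qed.

Lemma sample_var_gt0 : 0 < s2.
Proof.
rewrite divr_gt0 ?ltr0n ?(leq_trans _ n_ge2) // lt0r sumr_ge0 ?andbT => [|i _].
  apply/eqP => /psumr_eq0P sq0; apply: (column_nonconstant (c := m)) => i.
  by apply/eqP; rewrite -subr_eq0 -sqrf_eq0 sq0 // => ? _; exact: sqr_ge0.
exact: sqr_ge0.
Qed.

Lemma muzE : muz E j = shift_mean k m.
Proof.
apply/funext => z.
have sumE : \sum_(i < n) E i j = m * n%:R by rewrite divfK ?natr_n_neq0.
rewrite /muz /shift_mean sumE /k -natr1; field.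
by rewrite natr1 pnatr_eq0.
Qed.

Lemma sigmazE : sigmaz E j = shift_sd k m s2.
Proof.
apply/funext => z; rewrite /sigmaz /shift_sd; congr Num.sqrt.
set c := muz E j z.
have centred : \sum_(i < n) (E i j - m) = 0.
  by rewrite sumrB sumr_const card_ord -mulr_natl mulrC divfK ?natr_n_neq0 // subrr.
have shift : \sum_(i < n) (E i j - c) ^+ 2 = \sum_(i < n) (E i j - m) ^+ 2
    + (2 * (m - c) * \sum_(i < n) (E i j - m) + n%:R * (m - c) ^+ 2).
  rewrite (eq_bigr (fun i => (E i j - m) ^+ 2 + (2 * (m - c) * (E i j - m) + (m - c) ^+ 2))).
    by rewrite big_split big_split /= -mulr_sumr sumr_const card_ord [n%:R * _]mulr_natl.
  by move=> i _; ring.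
rewrite shift centred /c muzE /shift_mean /s2 /k -natr1; field.
by rewrite addrC natr1 pnatr_eq0 natr_n_neq0.
Qed.

Lemma sigmaz_eE : sigmaz_e E j = shift_sd_e k m s2.
Proof. by apply/funext; case => [z| |] //=; rewrite sigmazE. Qed.

End EmpiricalMoments.

Lemma omega_ge0 (R : realType) (n d : nat) (E : 'I_n -> 'I_d -> R) j c :
  (forall i, 0 <= E i j) -> (0 <= omega E j c)%E.
Proof.
move=> E_ge0; have mu0 : 0 <= muhat E j by rewrite divr_ge0 // sumr_ge0.
case: c => [c| |] /=; [|exact: leey|by []].
case: ifP => _ //; case: ifP => _; first by rewrite lee_fin le_max lexx.
case: ifP => _; last exact: leey.
by rewrite lee_fin addr_ge0 // !mulr_ge0 ?sqrtr_ge0 ?normr_ge0.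
Qed.

Section CoordinateImages.
Variables (R : realType) (n d : nat) (E : 'I_n -> 'I_d -> R) (alpha : R).
Variables (T : Type) (f : R -> T) (j : 'I_d).

Lemma Rh_coord_image h z0 : Rh E alpha h z0 ->
  [set f (z j) | z in Rh E alpha h] =
  f @` [set x | (Eord E j (h j).-1 <= x%:E)%E /\ (x%:E < Uh E alpha j (h j))%E].
Proof.
move=> Rz0; apply/seteqP; split => _ [z hz <-]; first by exists (z j) => //; exact: hz.
exists (fun i => if i == j then z else z0 i); last by rewrite eqxx.
by move=> i; case: eqP => [->|_] //; exact: Rz0.
Qed.

Lemma E_gwc_coord_image : (forall i j, 0 <= E i j) ->
  [set f (z j) | z in E_gwc E alpha] =
  f @` [set x | 0 <= x /\ (x%:E <= omega E j (Q_gwc E alpha))%E].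
Proof.
move=> E_ge0; apply/seteqP; split => _ [z hz <-]; first by exists (z j) => //; exact: hz.
exists (fun i => if i == j then z else 0); last by rewrite eqxx.
by move=> i; case: eqP => [->|_] //; split => //; exact: omega_ge0 _ (E_ge0^~ i).
Qed.

End CoordinateImages.

Theorem lemma3p6 (R : realType) (n d : nat) (alpha : R)
  (E : 'I_n -> 'I_d -> R) (X : Type) (Eres : X -> ('I_d -> R) -> ('I_d -> R))
  (Xtest : X) (h : 'I_d -> nat) (t : 'I_d -> R) :
  (2 <= n)%N -> (1 <= d)%N -> 0 < alpha < 1 ->
  (forall i j, 0 <= E i j) ->
  (forall j, injective (fun i => E i j)) ->
  (forall j, (1 <= h j <= n.+1)%N) ->
  Yh E Eres Xtest alpha h !=set0 ->
  (forall j, 0 <= t j) ->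
  Phi_lwc E alpha t h =
  (\big[Order.max/-oo%E]_(j < d)
     (t j / r_h E alpha j (h j)
      - Num.min (muz E j 0 / sigmaz E j 0) (lim_ratio E alpha j))%:E)%E.
Proof.
move=> n_ge2 _ _ E_ge0 E_inj _ [y Ry] t_ge0; apply: eq_bigr => j _.
have Rz : Rh E alpha h (Eres Xtest y) := Ry.
have k_gt0 : 0 < (n.+1%:R : R)^-1 by rewrite invr_gt0 ltr0n.
have k_lt1 : (n.+1%:R : R)^-1 < 1.
  by rewrite invf_lt1 ?ltr0n // ltr1n ltnS (leq_trans _ n_ge2).
have m_gt0 := muhat_gt0 n_ge2 (E_ge0^~ j) (E_inj j).
have s2_gt0 := sample_var_gt0 n_ge2 (E_inj j).
rewrite (Rh_coord_image (fun x => (t j / sigmaz E j x)%:E) j Rz).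
rewrite (E_gwc_coord_image alpha (fun x => (muz E j x / sigmaz E j x)%:E) j E_ge0).
rewrite /lim_ratio /r_h (sigmaz_eE E j n_ge2) (muzE E j n_ge2) (sigmazE E j n_ge2).
rewrite (ereal_sup_div_shift_sd _ k_gt0 s2_gt0 (t_ge0 j) (Rz j).1 (Rz j).2).
rewrite (ereal_inf_shift_ratio k_gt0 k_lt1 m_gt0 s2_gt0 (omega_ge0 _ (E_ge0^~ j))).
by case: omega.
Qed.
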